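(* For all types $A,B,C,D$: (1) if $A\wedge B\equiv C\wedge D$ then $A\equiv C$ and $B\equiv D$; (2) if $A\Rightarrow B\equiv C\Rightarrow D$ then $A\equiv C$ and $B\equiv D$; (3) if $A\wedge B\equiv C\Rightarrow D$ then there exist types $D_1,D_2$ with $D\equiv D_1\wedge D_2$, $A\equiv C\Rightarrow D_1$ and $B\equiv C\Rightarrow D_2$.
   Context: Types: $A ::= \tau \mid A\Rightarrow A \mid A\wedge A$ with $\tau$ a single atomic type. The relation $\equiv$ on types is the smallest relation that is reflexive, symmetric, transitive, contains $A\Rightarrow (B\wedge C)\equiv (A\Rightarrow B)\wedge(A\Rightarrow C)$ for all $A,B,C$, and satisfies: $A\equiv C$ implies $A\Rightarrow B\equiv C\Rightarrow B$ and $A\wedge B\equiv C\wedge B$; $B\equiv C$ implies $A\Rightarrow B\equiv A\Rightarrow C$ and $A\wedge B\equiv A\wedge C$. *)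

Inductive ty : Type :=
| Atom : ty
| Arr : ty -> ty -> ty
| And : ty -> ty -> ty.

Inductive tyeq : ty -> ty -> Prop :=
| tyeq_refl : forall A, tyeq A A
| tyeq_sym : forall A B, tyeq A B -> tyeq B A
| tyeq_trans : forall A B C, tyeq A B -> tyeq B C -> tyeq A C
| tyeq_distr : forall A B C, tyeq (Arr A (And B C)) (And (Arr A B) (Arr A C))
| tyeq_arr_l : forall A B C, tyeq A C -> tyeq (Arr A B) (Arr C B)
| tyeq_and_l : forall A B C, tyeq A C -> tyeq (And A B) (And C B)
| tyeq_arr_r : forall A B C, tyeq B C -> tyeq (Arr A B) (Arr A C)
| tyeq_and_r : forall A B C, tyeq B C -> tyeq (And A B) (And A C).

(* Distributing every arrow over the conjunctions in its codomain gives a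
   normal form [nf] that is invariant under each generating rule of [tyeq]
   and equivalent to the original type, so [tyeq A B <-> nf A = nf B].  The
   three decomposition properties then reduce to injectivity-style facts
   about the syntactic normal forms. *)

From Stdlib Require Import Setoid Morphisms.

#[export] Instance tyeq_equivalence : Equivalence tyeq.
Proof.
  split; [exact tyeq_refl | exact tyeq_sym | exact tyeq_trans].
Qed.

#[export] Instance Arr_tyeq_proper : Proper (tyeq ==> tyeq ==> tyeq) Arr.
Proof.
  intros A C HAC B D HBD.
  transitivity (Arr C B); [apply tyeq_arr_l | apply tyeq_arr_r]; assumption.
Qed.

#[export] Instance And_tyeq_proper : Proper (tyeq ==> tyeq ==> tyeq) And.
Proof.
  intros A C HAC B D HBD.
  transitivity (And C B); [apply tyeq_and_l | apply tyeq_and_r]; assumption.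
Qed.

Fixpoint arr_dist (a X : ty) : ty :=
  match X with
  | And X1 X2 => And (arr_dist a X1) (arr_dist a X2)
  | _ => Arr a X
  end.

Fixpoint nf (A : ty) : ty :=
  match A with
  | Atom => Atom
  | And A B => And (nf A) (nf B)
  | Arr A B => arr_dist (nf A) (nf B)
  end.

Lemma tyeq_arr_dist (a X : ty) : tyeq (Arr a X) (arr_dist a X).
Proof.
  induction X as [| X1 _ X2 _ | X1 IH1 X2 IH2]; simpl; try reflexivity.
  now rewrite tyeq_distr, IH1, IH2.
Qed.

Lemma tyeq_nf (A : ty) : tyeq A (nf A).
Proof.
  induction A as [| A1 IH1 A2 IH2 | A1 IH1 A2 IH2]; simpl.
  - reflexivity.
  - now rewrite <- tyeq_arr_dist, <- IH1, <- IH2.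
  - now rewrite <- IH1, <- IH2.
Qed.

Lemma nf_tyeq (A B : ty) : tyeq A B -> nf A = nf B.
Proof. intros H; induction H; simpl; congruence. Qed.

Lemma tyeq_nfP (A B : ty) : tyeq A B <-> nf A = nf B.
Proof.
  split; [apply nf_tyeq |].
  intros H. now rewrite (tyeq_nf A), (tyeq_nf B), H.
Qed.

Lemma arr_dist_inj (a c X Y : ty) :
  arr_dist a X = arr_dist c Y -> a = c /\ X = Y.
Proof.
  revert a c Y; induction X as [| X1 _ X2 _ | X1 IH1 X2 IH2];
    intros a c [| Y1 Y2 | Y1 Y2] H; simpl in H;
    try discriminate; try (injection H; intros; subst; auto; fail).
  injection H as H1 H2.
  destruct (IH1 _ _ _ H1), (IH2 _ _ _ H2); subst; auto.
Qed.

Lemma arr_dist_eq_And (c X Y Z : ty) :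
  arr_dist c X = And Y Z ->
  exists X1 X2, X = And X1 X2 /\ Y = arr_dist c X1 /\ Z = arr_dist c X2.
Proof.
  destruct X as [| | X1 X2]; simpl; intros H; try discriminate.
  injection H as <- <-. now exists X1, X2.
Qed.

Lemma tyeq_And_inj (A B C D : ty) :
  tyeq (And A B) (And C D) -> tyeq A C /\ tyeq B D.
Proof.
  rewrite !tyeq_nfP; simpl; intros H. now injection H.
Qed.

Lemma tyeq_Arr_inj (A B C D : ty) :
  tyeq (Arr A B) (Arr C D) -> tyeq A C /\ tyeq B D.
Proof.
  rewrite !tyeq_nfP; simpl; apply arr_dist_inj.
Qed.

Lemma tyeq_And_Arr (A B C D : ty) :
  tyeq (And A B) (Arr C D) ->
  exists D1 D2, tyeq D (And D1 D2) /\ tyeq A (Arr C D1) /\ tyeq B (Arr C D2).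
Proof.
  rewrite tyeq_nfP; simpl; intros H; symmetry in H.
  destruct (arr_dist_eq_And _ _ _ _ H) as (D1 & D2 & HD & HA & HB).
  exists D1, D2; split; [| split].
  - now rewrite tyeq_nf, HD.
  - now rewrite tyeq_nf, HA, <- tyeq_arr_dist, <- tyeq_nf.
  - now rewrite tyeq_nf, HB, <- tyeq_arr_dist, <- tyeq_nf.
Qed.

Theorem lemma4 :
  forall A B C D : ty,
    (tyeq (And A B) (And C D) -> tyeq A C /\ tyeq B D) /\
    (tyeq (Arr A B) (Arr C D) -> tyeq A C /\ tyeq B D) /\
    (tyeq (And A B) (Arr C D) ->
       exists D1 D2 : ty,
         tyeq D (And D1 D2) /\ tyeq A (Arr C D1) /\ tyeq B (Arr C D2)).
Proof.
  intros A B C D.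
  split; [| split]; [apply tyeq_And_inj | apply tyeq_Arr_inj | apply tyeq_And_Arr].
Qed.
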